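(* Let $\psi$ be a saturation with saturation level $\alpha>0$ and $\mathbf{u}:[0,L]\to\mathbb{R}^P$ a given velocity. Fix $n$ and suppose $\boldsymbol{\rho}_i^n\ge0$ entry-wise and $\sigma_i^n\le\alpha$ for all $i=1,\dots,M$. If $(\boldsymbol{\rho}_i^{n+1})_{i=1}^M\subset\mathbb{R}^P$ satisfies the implicit scheme $$\frac{\boldsymbol{\rho}_i^{n+1}-\boldsymbol{\rho}_i^n}{\Delta t}+\frac{\mathbf{F}_{i+1/2}^{n+1}-\mathbf{F}_{i-1/2}^{n+1}}{\Delta x}=0,\quad \mathbf{F}_{i+1/2}^{n+1}=\mathrm{diag}(\boldsymbol{\rho}_i^{n+1})(\psi_{i+1}^{n+1})^+\mathbf{u}_{i+1/2}^++\mathrm{diag}(\boldsymbol{\rho}_{i+1}^{n+1})(\psi_i^{n+1})^+\mathbf{u}_{i+1/2}^-,$$ with $\psi_i^n=\psi(\sigma_i^n)$, $\sigma_i^n=\sum_{p=1}^P(\boldsymbol{\rho}_i^n)_p$, $\mathbf{u}_{i+1/2}=\mathbf{u}(x_{i+1/2})$, and no-flux boundary conditions $\mathbf{F}_{1/2}^{n+1}=\mathbf{F}_{M+1/2}^{n+1}=0$, then $\boldsymbol{\rho}_i^{n+1}\ge0$ entry-wise and $\sigma_i^{n+1}\le\alpha$ for all $i$, unconditionally (for any $\Delta t,\Delta x>0$).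
   Context: A saturation is a continuous function $\psi:[0,\infty)\to\mathbb{R}$ that is non-increasing and for which there is $\alpha>0$ (the saturation level) with $\psi(\alpha)=0$ and $(\alpha-s)\psi(s)>0$ for $s\neq\alpha$. Discretisation of $(0,L)$: $\Delta x=L/M$, cells with centres $x_i=\Delta x(i-1/2)$ and interfaces $x_{i+1/2}$; $\boldsymbol{\rho}_i^n\in\mathbb{R}^P$ is the vector of species densities on cell $i$ at time $t^n$. $\mathrm{diag}(\mathbf{v})$ is the diagonal matrix with the entries of $\mathbf{v}$; $(\cdot)^+=\max\{\cdot,0\}$ and $(\cdot)^-=\min\{\cdot,0\}$, applied entry-wise to vectors. (This is a scheme for $\partial_t\boldsymbol{\rho}+\partial_x(\mathrm{diag}(\boldsymbol{\rho})\psi(\sigma)\mathbf{u})=0$.) *)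

From HB Require Import structures.
From mathcomp Require Import all_boot all_order all_algebra.
From mathcomp Require Import all_classical all_reals all_analysis.
Set Implicit Arguments. Unset Strict Implicit. Unset Printing Implicit Defensive.
Import Order.TTheory GRing.Theory Num.Theory.
Import numFieldNormedType.Exports.
Local Open Scope classical_set_scope.
Local Open Scope ring_scope.

(* A saturation psi : [0,oo) -> R with saturation level alpha.
   psi is given as a total function R -> R; only its restriction to [0,oo)
   is constrained. *)
Definition saturation (R : realType) (psi : R -> R) (alpha : R) : Prop :=
  [/\ {within [set x : R | 0 <= x], continuous psi},
      (forall s t : R, 0 <= s -> s <= t -> psi t <= psi s),
      0 < alpha,
      psi alpha = 0 &
      (forall s : R, 0 <= s -> s != alpha -> 0 < (alpha - s) * psi s)].

Definition ppart (R : realType) (x : R) : R := Num.max x 0.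
Definition npart (R : realType) (x : R) : R := Num.min x 0.

(* Cells are indexed 0-based: cell i (0 <= i < M) is the paper's cell i+1,
   with centre (i + 1/2) dx.  rho i p = density of species p in cell i. *)
Definition sigma (R : realType) (P : nat) (rho : nat -> 'I_P -> R) (i : nat) : R :=
  \sum_(p < P) rho i p.

(* Numerical flux at interface k (position k * dx), 0 <= k <= M; interface k
   is the paper's interface x_{k+1/2} in 1-based cell numbering shifted by one, i.e. lies between (0-based) cells k-1 and k.
   No-flux boundary conditions: flux is 0 at k = 0 and k = M. *)
Definition flux (R : realType) (P : nat) (psi : R -> R) (u : R -> 'I_P -> R)
    (dx : R) (M : nat) (rho : nat -> 'I_P -> R) (k : nat) (p : 'I_P) : R :=
  if (0 < k < M)%N then
    rho k.-1 p * ppart (psi (sigma rho k)) * ppart (u (k%:R * dx) p)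
    + rho k p * ppart (psi (sigma rho k.-1)) * npart (u (k%:R * dx) p)
  else 0.

(* Freeze the nonlinear coefficients at the unknown solution: for each species
   the scheme becomes a linear conservative upwind scheme whose flux through an
   interface is a nonnegative multiple of the density on its left plus a
   nonpositive multiple of the density on its right.  Pairing the scheme
   with the indicator of the cells where the new density is negative and
   summing by parts (the boundary fluxes vanish), each interface contributes
   with the favourable sign, so the sum of the negative parts of the new
   densities is nonnegative, hence zero.  If a cell had total density above
   [alpha], [psi] would be negative there, so its positive part vanishes and
   the cell receives no inflow; then its total density can only decrease and
   stays below [alpha], a contradiction. *)
From HB Require Import structures.
From mathcomp Require Import all_boot all_order all_algebra.
From mathcomp Require Import all_classical all_reals all_analysis.
From mathcomp Require Import ring lra.

Set Implicit Arguments.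
Unset Strict Implicit.
Unset Printing Implicit Defensive.

Import Order.TTheory GRing.Theory Num.Theory.
Local Open Scope ring_scope.

Lemma sumr_mul_diff_by_parts (R : pzRingType) (M : nat) (s F : nat -> R) :
  F 0%N = 0 -> F M = 0 ->
  \sum_(0 <= i < M) s i * (F i.+1 - F i) =
  \sum_(0 <= k < M.+1) (s k.-1 - s k) * F k.
Proof.
move=> F0 FM.
under eq_bigr do rewrite mulrBr.
under [RHS]eq_bigr do rewrite mulrBl.
rewrite !sumrB big_nat_recl // big_nat_recr //=.
by rewrite F0 FM !mulr0 add0r addr0.
Qed.

Lemma finite_volume_update (R : fieldType) (x y d dt dx : R) :
  dt != 0 -> dx != 0 -> (x - y) / dt + d / dx = 0 -> x = y - dt / dx * d.
Proof.
move=> dt_neq0 dx_neq0 scheme; apply/eqP; rewrite -subr_eq0.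
have -> : x - (y - dt / dx * d) = dt * ((x - y) / dt + d / dx).
  by field; rewrite dx_neq0 dt_neq0.
by rewrite scheme mulr0.
Qed.

Section UpwindScheme.

Variables (R : realFieldType) (M : nat) (a b : nat -> R).
Hypothesis a_ge0 : forall k, (0 < k < M)%N -> 0 <= a k.
Hypothesis b_le0 : forall k, (0 < k < M)%N -> b k <= 0.

Definition upwind_flux (r : nat -> R) (k : nat) : R :=
  if (0 < k < M)%N then a k * r k.-1 + b k * r k else 0.

Lemma upwind_flux_neg_indicator (r : nat -> R) (k : nat) :
  ((r k.-1 < 0)%R%:R - (r k < 0)%R%:R) * upwind_flux r k <= 0.
Proof.
rewrite /upwind_flux; case: ifP => [kM|_]; last by rewrite mulr0.
have := a_ge0 kM; have := b_le0 kM.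
by case: ltP => ?; case: ltP => ? /= ? ?; nra.
Qed.

Lemma upwind_scheme_nonneg (lam : R) (r0 r : nat -> R) :
  0 < lam -> (forall i, (i < M)%N -> 0 <= r0 i) ->
  (forall i, (i < M)%N ->
     r i = r0 i - lam * (upwind_flux r i.+1 - upwind_flux r i)) ->
  forall i, (i < M)%N -> 0 <= r i.
Proof.
move=> lam_gt0 r0_ge0 scheme.
pose s k : R := (r k < 0)%R%:R.
have neg_part_le0 j : s j * r j <= 0.
  by rewrite /s; case: ltP => [/ltW|_]; rewrite ?mul1r ?mul0r.
have neg_parts_ge0 : 0 <= \sum_(0 <= i < M) s i * r i.
  have -> : \sum_(0 <= i < M) s i * r i = \sum_(0 <= i < M) s i * r0 i
      - lam * \sum_(0 <= i < M) s i * (upwind_flux r i.+1 - upwind_flux r i).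
    rewrite mulr_sumr -sumrB; apply: eq_big_nat => i /andP[_ iM].
    by rewrite scheme // mulrBr mulrCA.
  rewrite subr_ge0; apply: (@le_trans _ _ 0).
    rewrite pmulr_rle0 // sumr_mul_diff_by_parts /upwind_flux ?ltnn ?andbF //.
    by apply: sumr_le0 => k _; apply: upwind_flux_neg_indicator.
  rewrite big_seq; apply: sumr_ge0 => i; rewrite mem_index_iota => /andP[_ iM].
  by rewrite mulr_ge0 ?r0_ge0 // /s; case: (_ < _).
move=> i iM; rewrite leNgt; apply/negP => ri_lt0.
have : 0 <= s i * r i.
  apply: (le_trans neg_parts_ge0).
  rewrite (bigD1_seq i) ?mem_index_iota ?iota_uniq //= gerDl.
  by apply: sumr_le0 => j _; apply: neg_part_le0.
by rewrite /s ri_lt0 mul1r leNgt ri_lt0.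
Qed.

Lemma upwind_scheme_no_inflow_le (lam : R) (r0 r : nat -> R) (i : nat) :
  0 < lam -> a i = 0 -> b i.+1 = 0 -> 0 <= r i ->
  r i = r0 i - lam * (upwind_flux r i.+1 - upwind_flux r i) -> r i <= r0 i.
Proof.
move=> lam_gt0 ai0 bi0 ri_ge0 ->.
rewrite gerDl oppr_le0 mulr_ge0 ?(ltW lam_gt0) // subr_ge0.
apply: (@le_trans _ _ 0); rewrite /upwind_flux; case: ifP => // kM.
  by rewrite ai0 mul0r add0r mulr_le0_ge0 ?b_le0.
by rewrite bi0 mul0r addr0 mulr_ge0 ?a_ge0.
Qed.

End UpwindScheme.

Lemma ppart_ge0 (R : realType) (x : R) : 0 <= ppart x.
Proof. by rewrite /ppart le_max lexx orbT. Qed.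

Lemma npart_le0 (R : realType) (x : R) : npart x <= 0.
Proof. by rewrite /npart ge_min lexx orbT. Qed.

Lemma ppart_eq0 (R : realType) (x : R) : x <= 0 -> ppart x = 0.
Proof. exact: max_r. Qed.

Lemma saturation_lt0 (R : realType) (psi : R -> R) (alpha s : R) :
  saturation psi alpha -> alpha < s -> psi s < 0.
Proof.
move=> [_ _ alpha_gt0 _ psi_sign] alpha_lt_s.
have := psi_sign s (ltW (lt_trans alpha_gt0 alpha_lt_s)) (negbT (gt_eqF alpha_lt_s)).
by rewrite nmulr_rgt0 // subr_lt0.
Qed.

Section FluxCoefficients.

Variables (R : realType) (P : nat) (psi : R -> R) (u : R -> 'I_P -> R).
Variables (dx : R) (rho : nat -> 'I_P -> R) (p : 'I_P).

Definition rightward_coef (k : nat) : R :=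
  ppart (psi (sigma rho k)) * ppart (u (k%:R * dx) p).

Definition leftward_coef (k : nat) : R :=
  ppart (psi (sigma rho k.-1)) * npart (u (k%:R * dx) p).

Lemma rightward_coef_ge0 (k : nat) : 0 <= rightward_coef k.
Proof. by rewrite mulr_ge0 ?ppart_ge0. Qed.

Lemma leftward_coef_le0 (k : nat) : leftward_coef k <= 0.
Proof. by rewrite mulr_ge0_le0 ?ppart_ge0 ?npart_le0. Qed.

Lemma flux_upwind (M k : nat) :
  flux psi u dx M rho k p =
  upwind_flux M rightward_coef leftward_coef (rho^~ p) k.
Proof.
by rewrite /flux /upwind_flux /rightward_coef /leftward_coef; case: ifP => _; ring.
Qed.

End FluxCoefficients.

Theorem proposition3p4 (R : realType) (P M : nat) (L dt : R)
    (psi : R -> R) (alpha : R) (u : R -> 'I_P -> R)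
    (rho_n rho_n1 : nat -> 'I_P -> R) :
  saturation psi alpha ->
  0 < L -> (0 < M)%N -> 0 < dt ->
  (forall i : nat, (i < M)%N -> forall p : 'I_P, 0 <= rho_n i p) ->
  (forall i : nat, (i < M)%N -> sigma rho_n i <= alpha) ->
  (forall i : nat, (i < M)%N -> forall p : 'I_P,
     (rho_n1 i p - rho_n i p) / dt
     + (flux psi u (L / M%:R) M rho_n1 i.+1 p
        - flux psi u (L / M%:R) M rho_n1 i p) / (L / M%:R) = 0) ->
  (forall i : nat, (i < M)%N -> forall p : 'I_P, 0 <= rho_n1 i p) /\
  (forall i : nat, (i < M)%N -> sigma rho_n1 i <= alpha).
Proof.
move=> sat L_gt0 M_gt0 dt_gt0 rho_n_ge0 sigma_n_le scheme.
set dx := L / M%:R.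
have lam_gt0 : 0 < dt / dx by rewrite !divr_gt0 // ltr0n.
pose a := rightward_coef psi u dx rho_n1; pose b := leftward_coef psi u dx rho_n1.
have a_ge0 p k : (0 < k < M)%N -> 0 <= a p k by rewrite rightward_coef_ge0.
have b_le0 p k : (0 < k < M)%N -> b p k <= 0 by rewrite leftward_coef_le0.
have step p i : (i < M)%N -> rho_n1 i p = rho_n i p - dt / dx *
    (upwind_flux M (a p) (b p) (rho_n1^~ p) i.+1
     - upwind_flux M (a p) (b p) (rho_n1^~ p) i).
  move=> iM; rewrite -!flux_upwind.
  by apply: finite_volume_update (scheme i iM p); rewrite gt_eqF // divr_gt0 ?ltr0n.
have rho_n1_ge0 i : (i < M)%N -> forall p, 0 <= rho_n1 i p.
  move=> iM p; apply: (upwind_scheme_nonneg (a_ge0 p) (b_le0 p) lam_gt0 _ (step p)) => //.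
  by move=> j jM; apply: rho_n_ge0.
split=> // i iM; rewrite leNgt; apply/negP => sigma_gt.
have psi_sat : ppart (psi (sigma rho_n1 i)) = 0.
  exact/ppart_eq0/ltW/(saturation_lt0 sat sigma_gt).
have : sigma rho_n1 i <= sigma rho_n i.
  apply: ler_sum => p _.
  apply: (upwind_scheme_no_inflow_le (a_ge0 p) (b_le0 p) (r0 := rho_n^~ p)
            lam_gt0 _ _ (rho_n1_ge0 i iM p) (step p i iM)).
  - by rewrite /a /rightward_coef psi_sat mul0r.
  - by rewrite /b /leftward_coef psi_sat mul0r.
by rewrite leNgt (le_lt_trans (sigma_n_le i iM) sigma_gt).
Qed.
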